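(* For every integer $n\ge 1$, $$\sum_{m=0}^{n-1}(3m+1)(-16)^{n-m-1}\binom{2m}{m} f_m=\binom{2n}{n}\sum_{k=0}^{n-1}\binom{n+2k}{3k}\binom{3k}{k}\binom{2k}{k}\frac{n(k-n)(-4)^{n-k}}{8(2k+1)}.$$
   Context: The Franel numbers are defined by $f_n=\sum_{k=0}^n \binom{n}{k}^3$ for integers $n\ge 0$. Binomial coefficients $\binom{a}{b}$ for nonnegative integers $a,b$ are the usual ones, with $\binom{a}{b}=0$ when $b>a$. *)

From HB Require Import structures.
From mathcomp Require Import all_boot all_order all_algebra.
Set Implicit Arguments. Unset Strict Implicit. Unset Printing Implicit Defensive.

Definition franel (n : nat) : nat := \sum_(0 <= k < n.+1) 'C(n, k) ^ 3.

From HB Require Import structures.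
From mathcomp Require Import all_boot all_order all_algebra.
From mathcomp Require Import ring zify.
Import GRing.Theory Num.Theory.
Local Open Scope ring_scope.

(* Both the Franel numbers f_n and Sun's sums
   s_n = \sum_k C(n+2k,3k) C(3k,k) C(2k,k) (-4)^(n-k) satisfy Franel's recurrence
   (n+1)^2 u_(n+1) = (7n^2+7n+2) u_n + 8n^2 u_(n-1), each by creative telescoping
   with an explicit certificate; their initial values agree, so f_n = s_n.
   Writing r(n,k) for the summand of the right-hand side, one checks
   2(2n+1)/(n+1) r(n+1,k) + 16 r(n,k) = (3n+1) C(n+2k,3k) C(3k,k) C(2k,k) (-4)^(n-k),
   and since C(2n+2,n+1) = 2(2n+1)/(n+1) C(2n,n), summing over k shows that both
   sides x_n of the identity obey x_(n+1) = -16 x_n + (3n+1) C(2n,n) f_n, x_0 = 0. *)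

Definition factr (a : nat) : rat := (a`!)%:R.

Lemma factr0 : factr 0 = 1. Proof. by []. Qed.

Lemma factrS a : factr a.+1 = a.+1%:R * factr a.
Proof. by rewrite /factr factS natrM. Qed.

Lemma binr_fact a b : (b <= a)%N ->
  'C(a, b)%:R = factr a / (factr b * factr (a - b)) :> rat.
Proof.
move=> le_ba; rewrite -[factr a](congr1 (fun x => x%:R : rat) (bin_fact le_ba)).
by rewrite !natrM; field; rewrite !pnatr_eq0 -!lt0n !fact_gt0.
Qed.

Ltac factr_neq0 := rewrite /factr; repeat (apply/andP; split);
  repeat (first [rewrite nat1r | rewrite natr1 | rewrite -natrD | rewrite -natrM]);
  rewrite ?pnatr_eq0 -?lt0n ?fact_gt0 //; try lia.

Definition rowsum (t : nat -> nat -> rat) n := \sum_(0 <= k < n.+1) t n k.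

Section CreativeTelescoping.

Context {t G : nat -> nat -> rat} {a b c : nat -> rat}.
Hypothesis t_gt : forall n k, (n < k)%N -> t n k = 0.

Lemma rowsum_widen {n m : nat} : (n <= m)%N -> rowsum t n = \sum_(0 <= k < m.+1) t n k.
Proof.
move=> le_nm; rewrite (@big_cat_nat _ _ _ n.+1 0 m.+1) //= [X in _ + X]big1_seq ?addr0 //.
by move=> k /andP[_]; rewrite mem_index_iota => /andP[lt_nk _]; exact: t_gt.
Qed.

Hypothesis G_0 : forall N, G N 0 = 0.
Hypothesis G_top : forall N, G N N.+2 = 0.
Hypothesis t_telescoper : forall N k, (0 < N)%N -> (k <= N.+1)%N ->
  a N * t N.+1 k - b N * t N k - c N * t N.-1 k = G N k.+1 - G N k.

Lemma rowsum_rec N : (0 < N)%N ->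
  a N * rowsum t N.+1 = b N * rowsum t N + c N * rowsum t N.-1.
Proof.
move=> N_gt0.
have : \sum_(0 <= k < N.+2) (a N * t N.+1 k - b N * t N k - c N * t N.-1 k) = 0.
  rewrite (@telescope_sumr_eq _ _ _ (G N)) ?G_0 ?G_top ?subr0 // => k /andP[_ le_kN].
  exact: t_telescoper.
rewrite (@rowsum_widen N N.+1) // (@rowsum_widen N.-1 N.+1); last by lia.
rewrite !sumrB -!mulr_sumr => /eqP; rewrite subr_eq0 subr_eq => /eqP ->.
by rewrite addrC.
Qed.

End CreativeTelescoping.

Definition franel_recurrence (u : nat -> rat) := forall N, (0 < N)%N ->
  N.+1%:R ^+ 2 * u N.+1 = (7 * N%:R ^+ 2 + 7 * N%:R + 2) * u N + 8 * N%:R ^+ 2 * u N.-1.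

Lemma franel_recurrence_eq u v : franel_recurrence u -> franel_recurrence v ->
  u 0 = v 0 -> u 1 = v 1 -> u =1 v.
Proof.
move=> rec_u rec_v u0 u1; elim/ltn_ind => -[|[|n]] IH //.
have lead_neq0 : (n.+2%:R ^+ 2 : rat) != 0 by rewrite expf_neq0 // pnatr_eq0.
by apply: (mulfI lead_neq0); rewrite rec_u // rec_v // !IH.
Qed.

Definition franel_term n k : rat := 'C(n, k)%:R ^+ 3.

(* The certificates franel_cert and sun_cert were found by Zeilberger's algorithm. *)
Definition franel_cert_poly (N k : rat) : rat :=
  4 * (k - 1) ^+ 3 + N * (-22 + 39 * k - 18 * k ^+ 2) + N ^+ 2 * (-32 + 27 * k) - 14 * N ^+ 3.

Definition franel_cert N k : rat :=
  if (0 < k <= N.+1)%N then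
    factr N ^+ 3 / (factr k.-1 ^+ 3 * factr (N.+1 - k) ^+ 3)
      * franel_cert_poly N%:R k%:R / N%:R
  else 0.

Lemma franel_term_gt n k : (n < k)%N -> franel_term n k = 0.
Proof. by move=> lt_nk; rewrite /franel_term bin_small // expr0n. Qed.

Lemma franel_telescoper N k : (0 < N)%N -> (k <= N.+1)%N ->
  N.+1%:R ^+ 2 * franel_term N.+1 k - (7 * N%:R ^+ 2 + 7 * N%:R + 2) * franel_term N k
    - 8 * N%:R ^+ 2 * franel_term N.-1 k
  = franel_cert N k.+1 - franel_cert N k.
Proof.
move=> N_gt0 le_kN; rewrite /franel_term /franel_cert /franel_cert_poly.
have [j EN] : exists j, N.+1 = (k + j)%N by exists (N.+1 - k)%N; rewrite subnKC.
case: j EN => [|j] EN.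
- rewrite addn0 in EN; subst k.
  rewrite (@bin_small N) // (@bin_small N.-1); last by lia.
  rewrite binn ltnn leqnn /= subnn factr0.
  by field; factr_neq0.
move: EN; rewrite addnS => -[EN]; subst N.
case: k N_gt0 le_kN => [|k] N_gt0 le_kN.
- rewrite add0n in N_gt0 *; case: j N_gt0 le_kN => [//|j] _ _.
  by rewrite !bin0 /= subSS subn0 factr0; field; factr_neq0.
case: j N_gt0 le_kN => [|j] _ _.
- rewrite addn0 /= binn (@bin_small k) // (@binr_fact k.+2 k.+1) //.
  rewrite subSnn subnn !leqnn !leqnSn ?ltnSn /= !factrS factr0.
  by field; factr_neq0.
rewrite (@binr_fact (k.+1 + j.+1).+1 k.+1) ?(@binr_fact (k.+1 + j.+1) k.+1)
  ?(@binr_fact (k.+1 + j.+1).-1 k.+1); try lia.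
have -> : ((k.+1 + j.+1).+1 - k.+1 = j.+2)%N by lia.
have -> : ((k.+1 + j.+1) - k.+1 = j.+1)%N by lia.
have -> : ((k.+1 + j.+1).-1 - k.+1 = j)%N by lia.
have -> : ((k.+1 + j.+1).+1 - k.+2 = j.+1)%N by lia.
have -> : (k.+2 <= (k.+1 + j.+1).+1)%N by lia.
have -> : (k.+1 <= (k.+1 + j.+1).+1)%N by lia.
rewrite !addSn !addnS /= !factrS.
by field; factr_neq0.
Qed.

Lemma franel_rowsum n : (franel n)%:R = rowsum franel_term n.
Proof. by rewrite /franel natr_sum; apply: eq_bigr => k _; rewrite natrX. Qed.

Lemma franel_recurrence_franel : franel_recurrence (fun n => (franel n)%:R).
Proof.
move=> N N_gt0; rewrite !franel_rowsum.
apply: (rowsum_rec franel_term_gt _ _ franel_telescoper) => // M.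
by rewrite /franel_cert ltnn andbF.
Qed.

Definition sun_term n k : rat :=
  ('C(n + 2 * k, 3 * k) * 'C(3 * k, k) * 'C(2 * k, k))%:R * (-4) ^+ (n - k).

Lemma sun_term_fact n k : (k <= n)%N ->
  sun_term n k = factr (n + 2 * k) / (factr (n - k) * factr k ^+ 3) * (-4) ^+ (n - k).
Proof.
move=> le_kn; rewrite /sun_term !natrM.
rewrite (@binr_fact (n + 2 * k) (3 * k)) ?(@binr_fact (3 * k) k) ?(@binr_fact (2 * k) k);
  try lia.
have -> : (n + 2 * k - 3 * k = n - k)%N by lia.
have -> : (3 * k - k = 2 * k)%N by lia.
have -> : (2 * k - k = k)%N by lia.
by field; factr_neq0.
Qed.

Lemma sun_term_gt n k : (n < k)%N -> sun_term n k = 0.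
Proof. by move=> lt_nk; rewrite /sun_term bin_small ?mul0r //; lia. Qed.

Definition sun_cert N k : rat :=
  if (0 < k <= N.+1)%N then
    -3 * (3 * N%:R + 2) * factr (N + 2 * k).-1 / (factr (N.+1 - k) * factr k.-1 ^+ 3)
      * (-4) ^+ (N.+1 - k)
  else 0.

Lemma sun_telescoper N k : (0 < N)%N -> (k <= N.+1)%N ->
  N.+1%:R ^+ 2 * sun_term N.+1 k - (7 * N%:R ^+ 2 + 7 * N%:R + 2) * sun_term N k
    - 8 * N%:R ^+ 2 * sun_term N.-1 k
  = sun_cert N k.+1 - sun_cert N k.
Proof.
move=> N_gt0 le_kN; rewrite /sun_cert.
have [->|ne_kN1] := eqVneq k N.+1.
  rewrite sun_term_fact // !sun_term_gt ?ltnSn ?andbF //=; last by lia.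
  rewrite ltnn subnn.
  have -> : (N.+1 + 2 * N.+1 = (3 * N).+3)%N by lia.
  have -> : ((N + 2 * N.+1).-1 = (3 * N).+1)%N by lia.
  by rewrite !factrS factr0 expr0; field; factr_neq0.
case: N N_gt0 le_kN ne_kN1 => [//|N] _ le_kN ne_kN1.
have [->|ne_kN] := eqVneq k N.+1.
  rewrite sun_term_fact // sun_term_fact // sun_term_gt //= !leqnSn leqnn !subnn subSnn.
  have -> : (N + 2 * N.+2 = (3 * N).+4)%N by lia.
  have -> : (N + 2 * N.+1 = (3 * N).+2)%N by lia.
  have -> : (N.+2 + 2 * N.+1 = (3 * N).+4)%N by lia.
  have -> : (N.+1 + 2 * N.+1 = (3 * N).+3)%N by lia.
  by rewrite !factrS factr0 expr0 expr1; field; factr_neq0.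
case: k le_kN ne_kN1 ne_kN => [|k] le_kN ne_kN1 ne_kN.
  rewrite !sun_term_fact //= !subn0 !addn0 subSS subn0.
  have -> : (N + 2 * 1 = N.+2)%N by lia.
  by rewrite !factrS factr0 !exprS; field; factr_neq0.
have [j EN] : exists j, N = (k + j.+1)%N by exists (N - k.+1)%N; lia.
subst N; rewrite !sun_term_fact; try lia.
have -> : (0 < k.+2 <= (k + j.+1).+2)%N by lia.
have -> : (0 < k.+1 <= (k + j.+1).+2)%N by lia.
have -> : (((k + j.+1).+1 + 2 * k.+2).-1 = (3 * k + j).+4.+1)%N by lia.
have -> : (((k + j.+1).+1 + 2 * k.+1).-1 = (3 * k + j).+3)%N by lia.
have -> : ((k + j.+1).+2 + 2 * k.+1 = (3 * k + j).+4.+1)%N by lia.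
have -> : ((k + j.+1).+1 + 2 * k.+1 = (3 * k + j).+4)%N by lia.
have -> : ((k + j.+1) + 2 * k.+1 = (3 * k + j).+3)%N by lia.
have -> : ((k + j.+1).+2 - k.+1 = j.+2)%N by lia.
have -> : ((k + j.+1).+1 - k.+1 = j.+1)%N by lia.
have -> : ((k + j.+1) - k.+1 = j)%N by lia.
have -> : ((k + j.+1).+2 - k.+2 = j.+1)%N by lia.
by rewrite /= !factrS !exprS; field; factr_neq0.
Qed.

Lemma franel_sun n : (franel n)%:R = rowsum sun_term n.
Proof.
move: n; apply: franel_recurrence_eq => [|N N_gt0||].
- exact: franel_recurrence_franel.
- apply: (rowsum_rec sun_term_gt _ _ sun_telescoper) => // M.
  by rewrite /sun_cert ltnn andbF.
- by rewrite /rowsum /franel !big_nat1.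
- rewrite /rowsum /franel /sun_term !big_nat_recr //= !big_nil !muln0 !bin0 !subn0 subnn.
  by rewrite (_ : 'C(1 + 2 * 1, 3 * 1) * 'C(3 * 1, 1) * 'C(2 * 1, 1) = 6)%N.
Qed.

Definition rhs_term n k : rat :=
  sun_term n k * (n%:R * (k%:R - n%:R) / (8 * (2 * k + 1)%:R)).

Lemma rhs_term_gt n k : (n < k)%N -> rhs_term n k = 0.
Proof. by move=> lt_nk; rewrite /rhs_term sun_term_gt ?mul0r. Qed.

Lemma rhs_term_step n k : (k <= n.+1)%N ->
  2 * (2 * n + 1)%:R / n.+1%:R * rhs_term n.+1 k + 16 * rhs_term n k
  = (3 * n + 1)%:R * sun_term n k.
Proof.
move=> le_kn; rewrite /rhs_term.
have [->|ne_kn] := eqVneq k n.+1; first by rewrite (@sun_term_gt n) // subrr; ring.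
have [j ->] : exists j, n = (k + j)%N by exists (n - k)%N; lia.
rewrite !sun_term_fact; try lia.
have -> : ((k + j).+1 + 2 * k = (3 * k + j).+1)%N by lia.
have -> : (k + j + 2 * k = 3 * k + j)%N by lia.
have -> : ((k + j).+1 - k = j.+1)%N by lia.
have -> : (k + j - k = j)%N by lia.
by rewrite !factrS !exprS; field; factr_neq0.
Qed.

Lemma central_binS n :
  'C(2 * n.+1, n.+1)%:R = 'C(2 * n, n)%:R * (2 * (2 * n + 1)%:R / n.+1%:R) :> rat.
Proof.
rewrite !binr_fact; try lia.
have -> : (2 * n.+1 - n.+1 = n.+1)%N by lia.
have -> : (2 * n - n = n)%N by lia.
have -> : (2 * n.+1 = (2 * n).+2)%N by lia.
by rewrite !factrS; field; factr_neq0.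
Qed.

Definition franel_lhs n : rat := \sum_(0 <= m < n)
  ((3 * m + 1)%:R * (-16) ^+ (n - m - 1) * 'C(2 * m, m)%:R * (franel m)%:R).

Definition franel_rhs n : rat := 'C(2 * n, n)%:R * rowsum rhs_term n.

Lemma franel_lhsS n : franel_lhs n.+1
  = -16 * franel_lhs n + (3 * n + 1)%:R * 'C(2 * n, n)%:R * (franel n)%:R.
Proof.
rewrite /franel_lhs big_nat_recr //= subSnn subnn expr0 mulr1 mulr_sumr; congr (_ + _).
apply: eq_big_nat => m /andP[_ lt_mn].
have -> : (n.+1 - m - 1 = (n - m - 1).+1)%N by lia.
by rewrite exprS; ring.
Qed.

Lemma franel_rhsS n : franel_rhs n.+1
  = -16 * franel_rhs n + (3 * n + 1)%:R * 'C(2 * n, n)%:R * (franel n)%:R.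
Proof.
have sum_step : 2 * (2 * n + 1)%:R / n.+1%:R * rowsum rhs_term n.+1
    + 16 * \sum_(0 <= k < n.+2) rhs_term n k
  = (3 * n + 1)%:R * \sum_(0 <= k < n.+2) sun_term n k.
  rewrite !mulr_sumr -big_split; apply: eq_big_nat => k /andP[_ lt_kn].
  exact: rhs_term_step.
rewrite /franel_rhs central_binS franel_sun (rowsum_widen rhs_term_gt (leqnSn n)).
rewrite (rowsum_widen sun_term_gt (leqnSn n)) -[LHS]mulrA (canRL (addrK _) sum_step).
by ring.
Qed.

Lemma franel_lhs_rhs n : franel_lhs n = franel_rhs n.
Proof.
elim: n => [|n IH]; last by rewrite franel_lhsS franel_rhsS IH.
by rewrite /franel_lhs /franel_rhs /rowsum big_nat1 big_geq // /rhs_term !(mulr0, mul0r).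
Qed.

Lemma franel_rhs_sum n :
  \sum_(0 <= k < n)
    (('C(n + 2 * k, 3 * k) * 'C(3 * k, k) * 'C(2 * k, k))%:R
     * ((n%:R : rat) * ((k%:~R : rat) - n%:~R) * (-4 : rat) ^+ (n - k)
        / (8 * (2 * k + 1)%:R)))
  = rowsum rhs_term n.
Proof.
rewrite /rowsum big_nat_recr //= {2}/rhs_term subrr mulr0 mul0r mulr0 addr0.
by apply: eq_bigr => k _; rewrite /rhs_term /sun_term; ring.
Qed.

Theorem mainTheorem6 (n : nat) (hn : (1 <= n)%N) :
  \sum_(0 <= m < n)
     ((3 * m + 1)%:R * (-16 : rat) ^+ (n - m - 1) * ('C(2 * m, m))%:R
        * (franel m)%:R)
  = ('C(2 * n, n))%:R *
    \sum_(0 <= k < n)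
      (('C(n + 2 * k, 3 * k) * 'C(3 * k, k) * 'C(2 * k, k))%:R
       * ((n%:R : rat) * ((k%:~R : rat) - n%:~R) * (-4 : rat) ^+ (n - k)
          / (8 * (2 * k + 1)%:R))).
Proof. by rewrite franel_rhs_sum -/(franel_lhs n) franel_lhs_rhs. Qed.
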